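(* Let $K$ be a commutative field whose characteristic is not equal to two, and let $G=T(2,K)$ be the group of invertible upper triangular matrices $\begin{bmatrix}\alpha & t\\ 0&\beta\end{bmatrix}$ with $\alpha,\beta\in K^*$, $t\in K$. Then for every real Banach space $E$, Jensen's functional equation $f(xy)+f(xy^{-1})=2f(x)$ is stable for the pair $(G;E)$: for every function $f\colon G\to E$ for which there is $c>0$ with $\|f(xy)+f(xy^{-1})-2f(x)\|\le c$ for all $x,y\in G$, there exists $j\colon G\to E$ with $j(xy)+j(xy^{-1})=2j(x)$ for all $x,y\in G$ such that $j-f$ is bounded on $G$.
   Context: $K^*$ denotes the multiplicative group of nonzero elements of $K$. *)

From HB Require Import structures.
From mathcomp Require Import all_boot all_order all_algebra.
From mathcomp Require Import all_classical all_reals all_analysis.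
Set Implicit Arguments. Unset Strict Implicit. Unset Printing Implicit Defensive.
Import Order.TTheory GRing.Theory Num.Theory.
Local Open Scope ring_scope.

(* T(2,K): invertible upper triangular 2x2 matrices over K, viewed as a
   subset of the ring 'M[K]_2 (group law = matrix product, inverse = ring
   inverse of 'M[K]_2, i.e. invmx). *)
Definition T2 (K : fieldType) : pred 'M[K]_2 :=
  [pred A : 'M[K]_2 | (A ord_max ord0 == 0) && (A \in unitmx)].

Arguments T2 K : clear implicits.

Definition jensen_sol (K : fieldType) (R : realType)
  (E : normedModType R) (j : 'M[K]_2 -> E) : Prop :=
  forall x y, x \in T2 K -> y \in T2 K ->
    j (x * y) + j (x * y^-1) = 2 *: j x.

From HB Require Import structures.
From mathcomp Require Import all_boot all_order all_algebra.
From mathcomp Require Import all_classical all_reals all_analysis.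
From mathcomp Require Import ring lra.
Import Order.TTheory GRing.Theory Num.Theory.
Set Implicit Arguments. Unset Strict Implicit. Unset Printing Implicit Defensive.
Import numFieldNormedType.Exports.
Local Open Scope classical_set_scope.
Local Open Scope ring_scope.

(** If c bounds the Jensen defect of f on a group, Jensen at (1, y), (x, y)
   and (y, x) shows that f - f 1 is quasi-additive, with defect 3c/2, on
   commuting pairs.  On the commutative subgroup of diagonal matrices of
   T(2,K), Hyers' doubling sequence 2^-n (f - f 1)(x^(2^n)) then converges to
   a homomorphism phi within 3c/2 of f - f 1.  Every x in T(2,K) factors as
   d u with d diagonal and u unipotent, and the involution s = diag(-1,1)
   conjugates d u into d u^-1; as |f (s y s) - f y| <= 3c for all y, Jensen
   at (d, u) gives |f x - f d| <= 2c.  Hence j x = f 1 + phi (diagonal part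
   of x) stays within 7c/2 of f, and it solves Jensen's equation because the
   diagonal part is a homomorphism. *)

Section HyersStability.
Variables (T : pzSemiRingType) (P : pred T) (R : realType).
Variables (E : completeNormedModType R) (h : T -> E) (d : R).
Hypothesis P1 : 1 \in P.
Hypothesis PM : {in P &, forall x y, x * y \in P}.
Hypothesis P_comm : {in P &, forall x y, x * y = y * x}.
Hypothesis h_quasi_additive : {in P &, forall x y, `|h (x * y) - h x - h y| <= d}.

Let PX x n : x \in P -> x ^+ n \in P.
Proof. by move=> Px; elim: n => [|n IH]; rewrite ?expr0 ?exprS ?PM. Qed.

Let d_ge0 : 0 <= d.
Proof. exact: le_trans (normr_ge0 _) (h_quasi_additive P1 P1). Qed.

Let half : R := 2^-1.
Let half_ge0 : 0 <= half. Proof. by rewrite invr_ge0 ler0n. Qed.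
Let half_lt1 : `|half| < 1. Proof. by rewrite ger0_norm // invf_lt1 ?ltr1n. Qed.

Let hseq x n : E := half ^+ n *: h (x ^+ (2 ^ n)).

Let hseqD x m n : hseq x (m + n) = half ^+ m *: hseq (x ^+ (2 ^ m)) n.
Proof. by rewrite /hseq scalerA -exprD expnD exprM. Qed.

Let hseq0 x : hseq x 0 = h x.
Proof. by rewrite /hseq expr0 expn0 expr1 scale1r. Qed.

Let hseq_near x n : x \in P -> `|hseq x n - h x| <= d.
Proof.
elim: n x => [|n IH] x Px; first by rewrite hseq0 subrr normr0.
have -> : hseq x n.+1 - h x
    = half *: (hseq (x ^+ 2) n - h (x ^+ 2)) + half *: (h (x * x) - h x - h x).
  rewrite -scalerDr -expr2 -[h (x ^+ 2) - _ - _]addrA subrKA -opprD scalerDr.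
  rewrite scalerN (hseqD x 1 n) expr1 -mulr2n -scaler_nat [half *: (2 *: _)]scalerA.
  by rewrite mulVf ?pnatr_eq0 // scale1r.
rewrite (le_trans (ler_normD _ _)) // !normrZ ger0_norm //.
have := IH _ (PX 2 Px); have := h_quasi_additive Px Px; rewrite /half; lra.
Qed.

Let hseq_step x n : x \in P -> `|hseq x n.+1 - hseq x n| <= d * half ^+ n.
Proof.
move=> Px; have -> : hseq x n = half ^+ n *: hseq (x ^+ (2 ^ n)) 0.
  by rewrite -hseqD addn0.
rewrite -addn1 hseqD -scalerBr hseq0 normrZ ger0_norm ?exprn_ge0 //.
by rewrite mulrC ler_wpM2r ?exprn_ge0 ?hseq_near ?PX.
Qed.

Let hseq_cvg x : x \in P -> cvgn (hseq x).
Proof.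
move=> Px; pose u n := hseq x n.+1 - hseq x n.
have : cvgn (series u).
  apply/normed_cvg/(@series_le_cvg _ _ (geometric d half)) => [n|n|n|].
  - exact: normr_ge0.
  - by rewrite /geometric /= mulr_ge0 ?exprn_ge0.
  - exact: hseq_step.
  - exact: is_cvg_geometric_series.
have -> : hseq x = (fun n => series u n + h x).
  by apply: funext => n; rewrite seriesEnat /= telescope_sumr // hseq0 subrK.
by move=> u_cvg; apply: is_cvgD => //; apply: is_cvg_cst.
Qed.

Let hseq_defect x y n : x \in P -> y \in P ->
  `|hseq (x * y) n - hseq x n - hseq y n| <= d * half ^+ n.
Proof.
move=> Px Py; rewrite /hseq (exprMn_comm _ (P_comm Px Py)) -!scalerBr normrZ.
by rewrite ger0_norm ?exprn_ge0 // mulrC ler_wpM2r ?exprn_ge0 ?h_quasi_additive ?PX.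
Qed.

Theorem hyers_stability : exists2 phi : T -> E,
  {in P &, {morph phi : x y / x * y >-> x + y}} &
  {in P, forall x, `|phi x - h x| <= d}.
Proof.
exists (fun x => limn (hseq x)) => [x y Px Py | x Px] /=.
  pose D n := hseq (x * y) n - hseq x n - hseq y n.
  have D_cvg0 : D @ \oo --> 0.
    apply: norm_cvg0; apply: (@squeeze_cvgr _ _ _ _ (fun=> 0) (geometric d half)).
    - by near=> n; rewrite normr_ge0 hseq_defect.
    - exact: cvg_cst.
    - exact: cvg_geometric.
  have D_cvg : D @ \oo --> limn (hseq (x * y)) - limn (hseq x) - limn (hseq y).
    by apply: cvgB; [apply: cvgB|]; apply: hseq_cvg; rewrite ?PM.
  apply/eqP; rewrite -subr_eq0 opprD addrA; apply/eqP.
  exact: cvg_unique D_cvg D_cvg0.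
rewrite distrC; apply: (closed_cvg (fun v => `|h x - v| <= d) _ _ _ (hseq_cvg Px)).
  exact: closed_closed_ball_.
by near=> n; rewrite distrC hseq_near.
Unshelve. all: by end_near.
Qed.
End HyersStability.

Section ApproximateJensen.
Variables (U : unitRingType) (G : pred U) (R : realType) (E : normedModType R).
Variables (f : U -> E) (c : R).
Hypothesis G1 : 1 \in G.
Hypothesis GM : {in G &, forall x y, x * y \in G}.
Hypothesis GV : {in G, forall x, x^-1 \in G}.
Hypothesis G_unit : {subset G <= GRing.unit}.
Hypothesis f_jensen : {in G &, forall x y,
  `|f (x * y) + f (x * y^-1) - f x *+ 2| <= c}.

Lemma jensen_inv_bound y : y \in G -> `|f y + f y^-1 - f 1 *+ 2| <= c.
Proof. by move=> Gy; have := f_jensen G1 Gy; rewrite !mul1r. Qed.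

Lemma jensen_conj_bound s x : s \in G -> s * s = 1 -> x \in G ->
  `|f (s * x * s) - f x| <= c *+ 3.
Proof.
move=> Gs ss1 Gx.
have sV : s^-1 = s by rewrite -[LHS]mulr1 -ss1 mulKr ?G_unit.
have := f_jensen Gs (GM Gx Gs).
rewrite mulrA invrM ?G_unit // sV mulrA ss1 mul1r -addrA => Dsx.
have Ds := f_jensen Gs Gs; rewrite sV ss1 in Ds.
have Ix := jensen_inv_bound Gx.
pose Z := f x^-1 - f s *+ 2.
have -> : f (s * x * s) - f x = (f (s * x * s) + Z) - (Z + f x) by rewrite addrKA.
have -> : Z + f x = f x + f x^-1 - f s *+ 2 by rewrite addrC addrA.
rewrite (le_trans (ler_normB _ _)) // [c *+ 3]mulrS mulr2n lerD //.
by rewrite (le_trans (ler_distD (f 1 *+ 2) _ _)) // lerD.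
Qed.

Lemma jensen_shift_bound s x u : s \in G -> s * s = 1 -> x \in G -> u \in G ->
  x * u^-1 = s * (x * u) * s -> `|f (x * u) - f x| <= c *+ 2.
Proof.
move=> Gs ss1 Gx Gu xuV.
have Dxu := f_jensen Gx Gu; rewrite xuV in Dxu.
have Cxu := jensen_conj_bound Gs ss1 (GM Gx Gu).
have : `|f (x * u) *+ 2 - f x *+ 2| <= c *+ 4.
  rewrite (le_trans (ler_distD (f (x * u) + f (s * (x * u) * s)) _ _)) //.
  by rewrite [c *+ 4]mulrSr lerD // mulr2n addrKA distrC.
by rewrite -mulrnBl normrMn => H; lra.
Qed.

Lemma jensen_comm_bound x y : x \in G -> y \in G -> x * y = y * x ->
  `|(f (x * y) - f 1) - (f x - f 1) - (f y - f 1)| <= c *+ 3 / 2.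
Proof.
move=> Gx Gy xyC.
have Dxy := f_jensen Gx Gy; have Dyx := f_jensen Gy Gx; rewrite -xyC in Dyx.
have Ixy := jensen_inv_bound (GM Gx (GV Gy)).
rewrite invrM ?invrK ?G_unit ?GV // in Ixy.
have -> : (f (x * y) - f 1) - (f x - f 1) - (f y - f 1) = f (x * y) - f x - f y + f 1.
  by rewrite !opprB subrKA addrA addrAC.
rewrite ler_pdivlMr // mulr_natr -normrMn.
have -> : (f (x * y) - f x - f y + f 1) *+ 2 = (f (x * y) + f (x / y) - f x *+ 2)
    + (f (x * y) + f (y / x) - f y *+ 2) - (f (x / y) + f (y / x) - f 1 *+ 2).
  rewrite (addrAC _ (f (x / y))) (addrAC _ (f (y / x))) addrACA addrKA opprK.
  by rewrite mulrnDl !mulrnBl [f (x * y) *+ 2]mulr2n addrACA opprD addrA.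
rewrite (le_trans (ler_normB _ _)) // [c *+ 3]mulrS [c *+ 2]mulr2n addrA.
by rewrite lerD // (le_trans (ler_normD _ _)) // lerD.
Qed.
End ApproximateJensen.

Section UpperTriangular.
Context {K : fieldType}.
Implicit Types (a b t : K) (x y : 'M[K]_2).

Definition utri_mx a t b : 'M[K]_2 :=
  \matrix_(i, j) if i == 0 :> nat then (if j == 0 :> nat then a else t)
                 else (if j == 0 :> nat then 0 else b).

Lemma utri_mxM a t b a' t' b' :
  utri_mx a t b * utri_mx a' t' b' = utri_mx (a * a') (a * t' + t * b') (b * b').
Proof.
apply/matrixP => i j; rewrite !mxE !big_ord_recl big_ord0 !mxE /=.
by case: i => [[|[|i]] ?] //=; case: j => [[|[|j]] ?] //=; ring.
Qed.

Lemma utri_mx1 : utri_mx 1 0 1 = 1.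
Proof.
by apply/matrixP => i j; rewrite !mxE; case: i => [[|[|i]] ?]; case: j => [[|[|j]] ?].
Qed.

Lemma utri_mxE x : x ord_max ord0 = 0 ->
  x = utri_mx (x ord0 ord0) (x ord0 ord_max) (x ord_max ord_max).
Proof.
move=> x10; apply/matrixP => i j; rewrite mxE.
case: i => [[|[|i]] ?]; case: j => [[|[|j]] ?] //=; rewrite -?x10.
all: by congr (x _ _); apply: val_inj.
Qed.

Lemma det_utri_mx a t b : \det (utri_mx a t b) = a * b.
Proof.
rewrite -det_tr det_trig; first by rewrite !big_ord_recl big_ord0 !mxE mulr1.
by apply/is_trig_mxP => -[[|[|i]] ?] -[[|[|j]] ?] //= _; rewrite !mxE.
Qed.

Lemma utri_mx_T2 a t b : (utri_mx a t b \in T2 K) = (a != 0) && (b != 0).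
Proof. by rewrite inE mxE /= eqxx unitmxE det_utri_mx unitfE mulf_eq0 negb_or. Qed.

Lemma T2P x : x \in T2 K -> exists a t b, [/\ a != 0, b != 0 & x = utri_mx a t b].
Proof.
move=> Tx; have /andP[/eqP x10 _] := Tx.
move: Tx; rewrite {1}(utri_mxE x10) utri_mx_T2 => /andP[a0 b0].
by exists (x ord0 ord0), (x ord0 ord_max), (x ord_max ord_max); rewrite -utri_mxE.
Qed.

Lemma utri_mxV a t b : a != 0 -> b != 0 ->
  (utri_mx a t b)^-1 = utri_mx a^-1 (- (t / (a * b))) b^-1.
Proof.
move=> a0 b0; have U : utri_mx a t b \is a GRing.unit.
  by have := utri_mx_T2 a t b; rewrite a0 b0 => /andP[].
apply: (mulrI U); rewrite mulrV // utri_mxM -utri_mx1.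
by congr utri_mx; field; rewrite ?a0 ?b0.
Qed.

Lemma T2_unit : {subset T2 K <= GRing.unit}.
Proof. by move=> x /andP[]. Qed.

Lemma T2_1 : 1 \in T2 K.
Proof. by rewrite -utri_mx1 utri_mx_T2 oner_neq0. Qed.

Lemma T2M : {in T2 K &, forall x y, x * y \in T2 K}.
Proof.
move=> _ _ /T2P[a [t [b [a0 b0 ->]]]] /T2P[a' [t' [b' [a0' b0' ->]]]].
by rewrite utri_mxM utri_mx_T2 !mulf_neq0.
Qed.

Lemma T2V : {in T2 K, forall x, x^-1 \in T2 K}.
Proof.
by move=> _ /T2P[a [t [b [a0 b0 ->]]]]; rewrite utri_mxV // utri_mx_T2 !invr_eq0 a0 b0.
Qed.

Definition T2diag : pred 'M[K]_2 := [pred x in T2 K | x ord0 ord_max == 0].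

Lemma T2diag_sub : {subset T2diag <= T2 K}.
Proof. by move=> x /andP[]. Qed.

Lemma T2diagP x :
  reflect (exists a b, [/\ a != 0, b != 0 & x = utri_mx a 0 b]) (x \in T2diag).
Proof.
apply: (iffP andP) => [[/T2P[a [t [b [a0 b0 ->]]]]] | [a [b [a0 b0 ->]]]].
  by rewrite mxE => /eqP->; exists a, b.
by rewrite utri_mx_T2 a0 b0 mxE.
Qed.

Lemma T2diag_1 : 1 \in T2diag.
Proof. by apply/T2diagP; exists 1, 1; rewrite oner_neq0 utri_mx1. Qed.

Lemma T2diag_mulC : {in T2diag &, forall x y, x * y = y * x}.
Proof.
move=> _ _ /T2diagP[a [b [_ _ ->]]] /T2diagP[a' [b' [_ _ ->]]].
by rewrite !utri_mxM !mulr0 !mul0r mulrC [b * _]mulrC.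
Qed.

Lemma T2diagM : {in T2diag &, forall x y, x * y \in T2diag}.
Proof.
move=> _ _ /T2diagP[a [b [a0 b0 ->]]] /T2diagP[a' [b' [a0' b0' ->]]].
apply/T2diagP; exists (a * a'), (b * b').
by rewrite utri_mxM mulr0 mul0r addr0 !mulf_neq0.
Qed.

Definition diag_part x := utri_mx (x ord0 ord0) 0 (x ord_max ord_max).

Lemma diag_part_utri a t b : diag_part (utri_mx a t b) = utri_mx a 0 b.
Proof. by rewrite /diag_part !mxE. Qed.

Lemma diag_part_T2diag : {in T2 K, forall x, diag_part x \in T2diag}.
Proof.
move=> _ /T2P[a [t [b [a0 b0 ->]]]].
by rewrite diag_part_utri; apply/T2diagP; exists a, b.
Qed.

Lemma diag_partM : {in T2 K &, {morph diag_part : x y / x * y}}.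
Proof.
move=> _ _ /T2P[a [t [b [_ _ ->]]]] /T2P[a' [t' [b' [_ _ ->]]]].
by rewrite utri_mxM !diag_part_utri utri_mxM mulr0 mul0r addr0.
Qed.
End UpperTriangular.

Arguments T2diag K : clear implicits.

Section JensenOnT2.
Variables (K : fieldType) (R : realType) (E : normedModType R).
Variables (f : 'M[K]_2 -> E) (c : R).
Hypothesis f_jensen : {in T2 K &, forall x y,
  `|f (x * y) + f (x * y^-1) - f x *+ 2| <= c}.

Lemma jensen_diag_part_bound x : x \in T2 K -> `|f x - f (diag_part x)| <= c *+ 2.
Proof.
case/T2P=> a [t [b [a0 b0 ->]]]; rewrite diag_part_utri.
pose s : 'M[K]_2 := utri_mx (-1) 0 1; pose u := utri_mx 1 (t / a) 1.
have Tx : utri_mx a 0 b \in T2 K by rewrite utri_mx_T2 a0 b0.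
have Ts : s \in T2 K by rewrite utri_mx_T2 oppr_eq0 oner_neq0.
have Tu : u \in T2 K by rewrite utri_mx_T2 oner_neq0.
have ss1 : s * s = 1 by rewrite utri_mxM -utri_mx1; congr utri_mx; ring.
have xu : utri_mx a 0 b * u = utri_mx a t b.
  by rewrite utri_mxM; congr utri_mx; field; rewrite ?oner_neq0.
have xuV : utri_mx a 0 b * u^-1 = s * (utri_mx a 0 b * u) * s.
  rewrite utri_mxV ?oner_neq0 // xu !utri_mxM.
  by congr utri_mx; field; rewrite ?oner_neq0.
rewrite -xu; exact (jensen_shift_bound T2_1 T2M T2_unit f_jensen Ts ss1 Tx Tu xuV).
Qed.

Lemma jensen_diag_quasi_additive : {in T2diag K &, forall x y,
  `|(f (x * y) - f 1) - (f x - f 1) - (f y - f 1)| <= c *+ 3 / 2}.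
Proof.
move=> x y Dx Dy; exact (jensen_comm_bound T2_1 T2M T2V T2_unit
  f_jensen (T2diag_sub Dx) (T2diag_sub Dy) (T2diag_mulC Dx Dy)).
Qed.
End JensenOnT2.

Lemma jensen_sol_add_morph (K : fieldType) (R : realType) (E : normedModType R)
    (e : E) (psi : 'M[K]_2 -> E) :
  {in T2 K &, {morph psi : x y / x * y >-> x + y}} -> jensen_sol (fun x => e + psi x).
Proof.
move=> psiM x y Tx Ty.
have psi1 : psi 1 = 0 by apply: (addrI (psi 1)); rewrite -psiM ?T2_1 // mulr1 addr0.
have psiV : psi y + psi y^-1 = 0 by rewrite -psiM ?T2V // mulrV ?T2_unit.
by rewrite !psiM ?T2V // scaler_nat mulr2n !(addrA e) addrACA psiV addr0.
Qed.

Theorem theorem3p14 (K : fieldType) (hK : (2%N \notin [pchar K]))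
  (R : realType) (E : completeNormedModType R) (f : 'M[K]_2 -> E) :
  (exists c : R, 0 < c /\
     forall x y, x \in T2 K -> y \in T2 K ->
       `| f (x * y) + f (x * y^-1) - 2 *: f x | <= c) ->
  exists j : 'M[K]_2 -> E,
    jensen_sol j /\
    exists M : R, forall x, x \in T2 K -> `| j x - f x | <= M.
Proof.
move=> [c [_ f_jensen]].
have {}f_jensen : {in T2 K &, forall x y,
    `|f (x * y) + f (x * y^-1) - f x *+ 2| <= c}.
  by move=> x y Tx Ty; rewrite -scaler_nat f_jensen.
have [phi phiM phi_near] := hyers_stability (h := fun x => f x - f 1) T2diag_1
  T2diagM T2diag_mulC (jensen_diag_quasi_additive f_jensen).
exists (fun x => f 1 + phi (diag_part x)); split.
  apply: jensen_sol_add_morph => x y Tx Ty.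
  by rewrite diag_partM // phiM ?diag_part_T2diag.
exists (c *+ 3 / 2 + c *+ 2) => x Tx.
rewrite (le_trans (ler_distD (f (diag_part x)) _ _)) // lerD //.
  by move: (phi_near _ (diag_part_T2diag Tx)); rewrite opprB addrCA addrA.
by rewrite distrC jensen_diag_part_bound.
Qed.
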